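(* Let $K$ be a field, $P=K[x_1,\dots,x_n]$, $g_1,\dots,g_r\in P$ generating a proper ideal $I$, and $Z=(z_1,\dots,z_s)$ a tuple of distinct indeterminates among $x_1,\dots,x_n$ such that the procedure $\mathrm{CHECK}$ applied to $(g_1,\dots,g_r)$ and $Z$ returns a weight tuple $W\in\mathbb{N}^n$. Let $\sigma$ be a term ordering on $P$ compatible with the grading given by $W$. Let $t_1>_\sigma\dots>_\sigma t_m$ be all terms in $\bigcup_j\operatorname{Supp}(g_j)$, let $M\in\operatorname{Mat}_{r,m}(K)$ be the coefficient matrix of $g_1,\dots,g_r$ with respect to $(t_1,\dots,t_m)$, let $N\in\operatorname{Mat}_{r',r}(K)$ be such that $NM$ is in reduced row echelon form without zero rows, and let $(g'_1,\dots,g'_{r'})^{\rm tr}=N(g_1,\dots,g_r)^{\rm tr}$. Then for each $i=1,\dots,s$ there exists an element $f_i\in\{g'_1,\dots,g'_{r'}\}$ with $\operatorname{LT}_\sigma(f_i)=z_i$, and $(f_1,\dots,f_s)$ is a $Z$-separating tuple of polynomials in $I$.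
   Context: $\operatorname{Supp}(f)$ is the set of terms occurring in $f$; $\operatorname{Lin}(f)$ is the homogeneous degree-1 component of $f$; $\langle\cdot\rangle_K$ denotes $K$-linear span. A tuple $(f_1,\dots,f_s)$ of polynomials in an ideal $I$ is $Z$-separating if there is a term ordering $\sigma$ with $\operatorname{LT}_\sigma(f_i)=z_i$ for all $i$. For $W\in\mathbb{N}^n$ the $W$-degree of $x_1^{a_1}\cdots x_n^{a_n}$ is $\sum w_ia_i$; a term ordering $\sigma$ is compatible with the grading given by $W$ if $t>_\sigma t'$ whenever the $W$-degree of $t$ exceeds that of $t'$. Procedure $\mathrm{LI}$ (linear interreduction), applied to a tuple $Z=(z_1,\dots,z_s)$ of distinct indeterminates and polynomials $g_1,\dots,g_r$: let $t_1>\dots>t_m$ (lexicographic order, $x_1>\dots>x_n$) be the terms of $\bigcup_j\operatorname{Supp}(g_j)$ other than $z_1,\dots,z_s$; form the coefficient matrix $M$ of $g_1,\dots,g_r$ w.r.t. column order $(z_1,\dots,z_s,t_1,\dots,t_m)$; output the polynomials whose coefficient vectors are the nonzero rows of the reduced row echelon form of $M$, in order. Procedure $\mathrm{CHECK}$ on input $(g_1,\dots,g_r)$ and $Z$: (1) set $w_1=\dots=w_n=0$, $\delta=\max_j\deg(g_j)$, $d=1$. (2) In each $g_j$ delete every monomial not divisible by some indeterminate of $Z$. (3) If $\dim_K\langle\operatorname{Lin}(g_1),\dots,\operatorname{Lin}(g_r)\rangle_K<\#Z$, return ``Fail''. (4) Repeat: (i) replace the current list $g_1,\dots,g_r$ by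 the output of $\mathrm{LI}$ applied to the current $Z$ and the current list; (ii) let $\widetilde Z$ be the set of indeterminates of the current $Z$ that occur as elements of the current list; (iii) if $\widetilde Z=\emptyset$, return ``Fail''; (iv) for each $z\in\widetilde Z$, say $z=x_k$, set $w_k=d$ and remove $z$ from $Z$; (v) in each current $g_j$ delete every monomial not divisible by some indeterminate of the (updated) $Z$; (vi) replace $d$ by $\delta d+1$; until $Z$ is empty. (5) Return $W=(w_1,\dots,w_n)$. *)

From HB Require Import structures.
From mathcomp Require Import all_boot all_order all_algebra.
From mathcomp Require Import mpoly.
Set Implicit Arguments. Unset Strict Implicit. Unset Printing Implicit Defensive.
Import Order.TTheory GRing.Theory.
Local Open Scope ring_scope.

Section Defs.
Variables (K : fieldType) (n : nat).
Local Notation P := {mpoly K[n]}.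
Local Notation mon := 'X_{1..n}.

Definition ltT (le : rel mon) (a b : mon) : bool := le a b && (a != b).

Definition term_ordering (le : rel mon) : Prop :=
  [/\ reflexive le, antisymmetric le, transitive le & total le] /\
  (forall m, le mnm0 m) /\
  (forall a b c, le a b -> le (mnm_add a c) (mnm_add b c)).

Definition LT_is (le : rel mon) (f : P) (t : mon) : Prop :=
  t \in msupp f /\ (forall u, u \in msupp f -> le u t).

Definition wdeg (W : {ffun 'I_n -> nat}) (m : mon) : nat :=
  (\sum_(i < n) W i * m i)%N.

Definition compatible (W : {ffun 'I_n -> nat}) (le : rel mon) : Prop :=
  forall t t', (wdeg W t' < wdeg W t)%N -> ltT le t' t.

Definition in_ideal (gs : seq P) (f : P) : Prop :=
  exists c : 'I_(size gs) -> P, f = \sum_(j < size gs) c j * gs`_j.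

Definition Z_separating (gs : seq P) (s : nat) (z : 'I_s -> 'I_n)
    (f : 'I_s -> P) : Prop :=
  (forall i, in_ideal gs (f i)) /\
  exists le, term_ordering le /\ forall i, LT_is le (f i) (mnm1 (z i)).

Definition coefmx (gs : seq P) (cols : seq mon) : 'M[K]_(size gs, size cols) :=
  \matrix_(j < size gs, k < size cols) (gs`_j)@_(nth mnm0 cols k).

Definition rowpoly (cols : seq mon) p (A : 'M[K]_(p, size cols)) (i : 'I_p) : P :=
  \sum_(k < size cols) A i k *: 'X_[nth mnm0 cols k].

Definition rref_nz p m (A : 'M[K]_(p, m)) : Prop :=
  exists piv : 'I_p -> 'I_m,
    [/\ (forall i j : 'I_p, (i < j)%N -> (piv i < piv j)%N),
        (forall i, A i (piv i) = 1),
        (forall i k, k != i -> A k (piv i) = 0) &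
        (forall i (j : 'I_m), (j < piv i)%N -> A i j = 0)].

Definition lex_gt (a b : mon) : bool :=
  [exists i : 'I_n, (b i < a i)%N && [forall j : 'I_n, (j < i)%N ==> (a j == b j)]].

(* The RREF of
   M is described as N *m M for some N, being in RREF without zero rows
   and having the same row space as M (this determines it uniquely). *)
Definition LI (Z : seq 'I_n) (gs gs' : seq P) : Prop :=
  exists ts : seq mon,
    [/\ uniq ts,
        (forall t, t \in ts <->
           ((exists2 g, g \in gs & t \in msupp g) /\ ~ (exists2 x, x \in Z & t = mnm1 x))),
        sorted lex_gt ts &
        let cols := [seq mnm1 x | x <- Z] ++ ts in
        exists p (N : 'M[K]_(p, size gs)),
          [/\ rref_nz (N *m coefmx gs cols),
              (coefmx gs cols <= N *m coefmx gs cols)%MS &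
              gs' = [seq rowpoly (N *m coefmx gs cols) i | i <- enum 'I_p]]].

Definition del_nondiv (Z : seq 'I_n) (g : P) : P :=
  \sum_(m <- msupp g | has (fun x => (0 < m x)%N) Z) g@_m *: 'X_[m].

Definition Lin (g : P) : P := \sum_(k < n) g@_(mnm1 k) *: 'X_k.

Definition lin_dim (gs : seq P) : nat :=
  \rank (\matrix_(j < size gs, k < n) (Lin gs`_j)@_(mnm1 k)).

Definition Zsel (Z : seq 'I_n) (gs : seq P) : seq 'I_n :=
  [seq x <- Z | 'X_x \in gs].

Definition upd_w (w : {ffun 'I_n -> nat}) (Zt : seq 'I_n) (d : nat) :
  {ffun 'I_n -> nat} := [ffun k => if k \in Zt then d else w k].

(* check_loop delta gs Z w d W : the loop of step (4), started with
   current list gs, current Z, current weights w and current d,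
   terminates (without "Fail") returning W. *)
Inductive check_loop (delta : nat) :
    seq P -> seq 'I_n -> {ffun 'I_n -> nat} -> nat -> {ffun 'I_n -> nat} -> Prop :=
| CL_stop gs Z w d gs1 :
    LI Z gs gs1 ->
    Zsel Z gs1 != [::] ->
    [seq x <- Z | x \notin Zsel Z gs1] = [::] ->
    check_loop delta gs Z w d (upd_w w (Zsel Z gs1) d)
| CL_cont gs Z w d gs1 Wf :
    LI Z gs gs1 ->
    Zsel Z gs1 != [::] ->
    [seq x <- Z | x \notin Zsel Z gs1] != [::] ->
    check_loop delta
      [seq del_nondiv [seq x <- Z | x \notin Zsel Z gs1] g | g <- gs1]
      [seq x <- Z | x \notin Zsel Z gs1]
      (upd_w w (Zsel Z gs1) d) (delta * d + 1)%N Wf ->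
    check_loop delta gs Z w d Wf.

Definition CHECK_returns (gs : seq P) (Z : seq 'I_n) (W : {ffun 'I_n -> nat}) : Prop :=
  let delta := (\max_(g <- gs) (msize g).-1)%N in
  let gs0 := [seq del_nondiv Z g | g <- gs] in
  ~ (lin_dim gs0 < size Z)%N /\
  check_loop delta gs0 Z [ffun => 0%N] 1%N W.

End Defs.

(* CHECK fixes the weights in rounds.  When a variable z leaves Z in the round
   with current value d, we get W z = d, and 'X_z is then a K-combination f of
   the g_j up to terms that avoid the remaining Z and have W-degree below d:
   LI only takes linear combinations, and the monomials deleted so far only
   involve variables of weight at most d, hence have W-degree at most
   d * delta < delta * d + 1.  So f = z + (terms of smaller W-degree), and
   LT_sigma(f) = z for every sigma compatible with W.  Since the rows of N M are
   in reduced row echelon form and span the row space of M, the first nonzero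
   column of the coefficient vector of f is a pivot column, and the row g'_i
   with that pivot has the same leading term. *)

From HB Require Import structures.
From mathcomp Require Import all_boot all_order all_algebra.
From mathcomp Require Import mpoly.
From mathcomp Require Import zify.
Set Implicit Arguments. Unset Strict Implicit. Unset Printing Implicit Defensive.
Import Order.TTheory GRing.Theory.
Local Open Scope ring_scope.

Section Coefficients.
Variables (K : fieldType) (n : nat).
Local Notation P := {mpoly K[n]}.
Local Notation mon := 'X_{1..n}.

Lemma mnm1_inj : injective (@mnm1 n).
Proof. by move=> i j /eqP; rewrite eq_mnm1 => /eqP. Qed.

Lemma wdeg_mnm1 (W : {ffun 'I_n -> nat}) x : wdeg W (mnm1 x) = W x.
Proof.
rewrite /wdeg (bigD1 x) //= mnm1E eqxx muln1 big1 ?addn0 // => i ni.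
by rewrite mnm1E eq_sym (negbTE ni) muln0.
Qed.

Lemma eq_wdeg (W1 W2 : {ffun 'I_n -> nat}) (m : mon) :
  (forall i, m i != 0%N -> W1 i = W2 i) -> wdeg W1 m = wdeg W2 m.
Proof.
move=> eqW; apply: eq_bigr => i _.
by case: (eqVneq (m i) 0%N) => [-> | /eqW ->]; rewrite ?muln0.
Qed.

Lemma wdeg_le_mdeg (W : {ffun 'I_n -> nat}) d (m : mon) :
  (forall i, m i != 0%N -> (W i <= d)%N) -> (wdeg W m <= d * mdeg m)%N.
Proof.
move=> leW; rewrite mdegE /wdeg big_distrr /=; apply: leq_sum => i _.
case: (eqVneq (m i) 0%N) => [-> | /leW Wi]; first by rewrite !muln0.
by rewrite leq_mul2r Wi orbT.
Qed.

Lemma mcoeff_rowpoly (cols : seq mon) p (A : 'M[K]_(p, size cols)) i (k : 'I_(size cols)) :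
  uniq cols -> (rowpoly A i)@_(nth mnm0 cols k) = A i k.
Proof.
move=> ucols; rewrite /rowpoly raddf_sum /= (bigD1 k) //= mcoeffZ mcoeffX eqxx mulr1.
rewrite big1 ?addr0 // => k' nk; rewrite mcoeffZ mcoeffX.
by rewrite nth_uniq ?ltn_ord // (inj_eq val_inj) (negbTE nk) mulr0.
Qed.

Lemma mcoeff_rowpoly_notin (cols : seq mon) p (A : 'M[K]_(p, size cols)) i m :
  m \notin cols -> (rowpoly A i)@_m = 0.
Proof.
move=> mNcols; rewrite /rowpoly raddf_sum big1 //= => k _; rewrite mcoeffZ mcoeffX.
case: (eqVneq (nth mnm0 cols k) m) => [mk | _]; last by rewrite mulr0.
by rewrite -mk mem_nth in mNcols.
Qed.

Lemma mcoeff_del_nondiv Z (g : P) m :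
  (del_nondiv Z g)@_m = if has (fun x => (0 < m x)%N) Z then g@_m else 0.
Proof.
rewrite /del_nondiv raddf_sum /=.
case: (boolP (m \in msupp g)) => ms.
  rewrite big_mkcond (bigD1_seq m) ?msupp_uniq //= big1 ?addr0.
    by case: ifP; rewrite ?mcoeffZ ?mcoeffX ?eqxx ?mulr1.
  by move=> m' nm; case: ifP => // _; rewrite mcoeffZ mcoeffX (negbTE nm) mulr0.
have g0 : g@_m = 0 by apply/eqP; rewrite mcoeff_eq0.
rewrite g0 if_same big1 // => m' _; rewrite mcoeffZ mcoeffX.
by case: (eqVneq m' m) => [-> | _]; rewrite ?g0 ?mul0r ?mulr0.
Qed.

Lemma mcoeff_lin_comb_neq0 (I : finType) (c : I -> K) (F : I -> P) m :
  (\sum_i c i *: F i)@_m != 0 -> exists i, (F i)@_m != 0.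
Proof.
move=> nz; apply/existsP; apply: contraR nz; rewrite negb_exists => /forallP F0.
rewrite raddf_sum big1 //= => i _; rewrite mcoeffZ.
by move: (F0 i); rewrite negbK => /eqP ->; rewrite mulr0.
Qed.

End Coefficients.

Section Span.
Variables (K : fieldType) (n : nat).
Local Notation P := {mpoly K[n]}.

Definition in_span (G : seq P) (f : P) : Prop :=
  exists c : 'I_(size G) -> K, f = \sum_(j < size G) c j *: G`_j.

Lemma in_span_mem (G : seq P) g : g \in G -> in_span G g.
Proof.
move=> gG; have jG : (index g G < size G)%N by rewrite index_mem.
exists (fun j => (j == Ordinal jG)%:R); rewrite (bigD1 (Ordinal jG)) //= eqxx scale1r.
by rewrite big1 ?addr0 ?nth_index // => j /negbTE ->; rewrite scale0r.
Qed.

Lemma in_span0 (G : seq P) : in_span G 0.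
Proof. by exists (fun _ => 0); rewrite big1 // => j _; rewrite scale0r. Qed.

Lemma in_spanD (G : seq P) f1 f2 : in_span G f1 -> in_span G f2 -> in_span G (f1 + f2).
Proof.
move=> [c1 ->] [c2 ->]; exists (fun j => c1 j + c2 j).
by rewrite -big_split; apply: eq_bigr => j _; rewrite scalerDl.
Qed.

Lemma in_spanZ (G : seq P) a f : in_span G f -> in_span G (a *: f).
Proof.
move=> [c ->]; exists (fun j => a * c j).
by rewrite scaler_sumr; apply: eq_bigr => j _; rewrite scalerA.
Qed.

Lemma in_ideal_span (G : seq P) f : in_span G f -> in_ideal G f.
Proof.
by move=> [c ->]; exists (fun j => (c j)%:MP); apply: eq_bigr => j _; rewrite mul_mpolyC.
Qed.

Lemma mcoeff_lin_comb_coefmx (G : seq P) (ts : seq 'X_{1..n}) (c : 'I_(size G) -> K)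
    (k : 'I_(size ts)) :
  (\sum_(j < size G) c j *: G`_j)@_(nth mnm0 ts k) = (\row_j c j *m coefmx G ts) 0 k.
Proof. by rewrite raddf_sum /= mxE; apply: eq_bigr => j _; rewrite mcoeffZ !mxE. Qed.

Lemma LI_in_span Z (G G1 : seq P) g1 : uniq Z -> LI Z G G1 -> g1 \in G1 -> in_span G g1.
Proof.
move=> uZ [ts [uts tsP _ [p [N [_ _ ->]]]]] /mapP[i _ ->].
set cols := [seq mnm1 x | x <- Z] ++ ts.
have ucols : uniq cols.
  rewrite cat_uniq (map_inj_uniq (@mnm1_inj n)) uZ uts /= andbT.
  apply/hasPn => t /tsP [_ tNZ]; apply/negP => /mapP [x xZ tx]; apply: tNZ; by exists x.
have suppG (j : 'I_(size G)) m : G`_j@_m != 0 -> m \in cols.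
  move=> nz; rewrite mem_cat; case: (boolP (m \in [seq mnm1 x | x <- Z])) => //= mNZ.
  apply/tsP; split; first by exists G`_j; [apply: mem_nth | rewrite mcoeff_msupp].
  by case=> x xZ mx; move: mNZ; rewrite mx map_f.
exists (fun j => N i j); apply/mpolyP => m; rewrite [RHS]raddf_sum /=.
case: (boolP (m \in cols)) => mcols.
  have mk : (index m cols < size cols)%N by rewrite index_mem.
  have -> : m = nth mnm0 cols (Ordinal mk) by rewrite /= nth_index.
  by rewrite mcoeff_rowpoly // !mxE; apply: eq_bigr => j _; rewrite mcoeffZ mxE.
rewrite mcoeff_rowpoly_notin // big1 // => j _; rewrite mcoeffZ.
have [-> | nz] := eqVneq (G`_j@_m) 0; first by rewrite mulr0.
by rewrite (suppG _ _ nz) in mcols.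
Qed.

End Span.

Section CheckLoop.
Variables (K : fieldType) (n : nat) (gs : seq {mpoly K[n]}).
Local Notation P := {mpoly K[n]}.

Definition low_terms (Z : seq 'I_n) (w : {ffun 'I_n -> nat}) d (h : P) : Prop :=
  forall m, h@_m != 0 -> (forall x, x \in Z -> m x = 0%N) /\ (wdeg w m < d)%N.

Definition near_span Z w d (g : P) : Prop :=
  exists2 f, in_span gs f & low_terms Z w d (f - g).

Definition deg_bounded delta (g : P) : Prop :=
  forall m, g@_m != 0 -> (mdeg m <= delta)%N.

Lemma low_termsD Z w d h1 h2 :
  low_terms Z w d h1 -> low_terms Z w d h2 -> low_terms Z w d (h1 + h2).
Proof.
move=> low1 low2 m; rewrite mcoeffD.
by have [-> | /low1] := eqVneq (h1@_m) 0; rewrite ?add0r; [apply: low2 |].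
Qed.

Lemma low_termsZ Z w d a h : low_terms Z w d h -> low_terms Z w d (a *: h).
Proof.
by move=> low m; rewrite mcoeffZ mulf_eq0 negb_or => /andP[_ /low].
Qed.

Lemma low_terms_weaken (Z Z' : seq 'I_n) (w w' : {ffun 'I_n -> nat}) d d' (h : P) :
  {subset Z' <= Z} -> (forall x, x \notin Z -> w' x = w x) -> (d <= d')%N ->
  low_terms Z w d h -> low_terms Z' w' d' h.
Proof.
move=> sZ eqw led low m /low [mZ lt_wd]; split; first by move=> x /sZ /mZ.
rewrite (@eq_wdeg _ _ w); first exact: leq_trans lt_wd led.
by move=> i mi; apply: eqw; apply: contra mi => /mZ ->.
Qed.

Lemma low_terms_del_nondiv Z (w : {ffun 'I_n -> nat}) d delta (g : P) :
  (forall x, x \notin Z -> (w x <= d)%N) -> deg_bounded delta g ->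
  low_terms Z w (delta * d + 1) (g - del_nondiv Z g).
Proof.
move=> lew degg m; rewrite mcoeffB mcoeff_del_nondiv.
case: ifP => [_ | hasZ]; first by rewrite subrr eqxx.
rewrite subr0 => gm; have mZ x : x \in Z -> m x = 0%N.
  move=> xZ; apply/eqP; rewrite -leqn0 leqNgt.
  by apply: contraFN hasZ => mx; apply/hasP; exists x.
split=> //; rewrite addn1 ltnS.
apply: (@leq_trans (d * mdeg m)); last by rewrite mulnC leq_mul2r degg ?orbT.
by apply: wdeg_le_mdeg => i mi; apply: lew; apply: contra mi => /mZ ->.
Qed.

Lemma near_span_lin_comb Z w d (G : seq P) (g : P) :
  (forall g, g \in G -> near_span Z w d g) -> in_span G g -> near_span Z w d g.
Proof.
move=> nearG [c ->]; apply: (big_ind (near_span Z w d)).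
- by exists 0; [apply: in_span0 | rewrite subr0 => m; rewrite mcoeff0 eqxx].
- move=> g1 g2 [f1 sp1 low1] [f2 sp2 low2]; exists (f1 + f2); first exact: in_spanD.
  by rewrite opprD addrACA; apply: low_termsD.
- move=> j _; have [f spf lowf] := nearG _ (mem_nth 0 (ltn_ord j)).
  by exists (c j *: f); [apply: in_spanZ | rewrite -scalerBr; apply: low_termsZ].
Qed.

Lemma deg_bounded_del_nondiv Z delta g :
  deg_bounded delta g -> deg_bounded delta (del_nondiv Z g).
Proof.
by move=> degg m; rewrite mcoeff_del_nondiv; case: ifP => _; [apply: degg | rewrite eqxx].
Qed.

Lemma deg_bounded_max g : g \in gs -> deg_bounded (\max_(g <- gs) (msize g).-1) g.
Proof.
move=> gG m; rewrite -mcoeff_msupp => /msize_mdeg_lt lt_m.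
apply: leq_trans (@leq_bigmax_seq _ gs xpredT (fun g : P => (msize g).-1) g gG isT).
by rewrite -ltnS (ltn_predK lt_m).
Qed.

Definition loop_inv delta (G : seq P) (Z : seq 'I_n) (w : {ffun 'I_n -> nat}) d : Prop :=
  [/\ uniq Z, forall x, x \notin Z -> (w x <= d)%N, (d <= delta * d + 1)%N,
      forall g, g \in G -> deg_bounded delta g &
      forall g, g \in G -> near_span Z w d g].

Lemma loop_inv_init Z : uniq Z ->
  loop_inv (\max_(g <- gs) (msize g).-1) [seq del_nondiv Z g | g <- gs] Z [ffun => 0%N] 1.
Proof.
move=> uZ; split=> // [x _ | | g0 /mapP [g gG ->] | g0 /mapP [g gG ->]].
- by rewrite ffunE.
- by rewrite muln1 addn1.
- exact/deg_bounded_del_nondiv/deg_bounded_max.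
exists g; first exact: in_span_mem.
have := @low_terms_del_nondiv Z [ffun => 0%N] 0 _ g _ (deg_bounded_max gG).
by rewrite muln0 add0n; apply=> x _; rewrite ffunE.
Qed.

Lemma loop_inv_LI delta (G G1 : seq P) Z w d g1 :
  loop_inv delta G Z w d -> LI Z G G1 -> g1 \in G1 ->
  near_span Z w d g1 /\ deg_bounded delta g1.
Proof.
move=> [uZ _ _ degG nearG] LIG g1G1; have [c g1E] := LI_in_span uZ LIG g1G1.
split; first by apply: near_span_lin_comb nearG _; exists c.
move=> m; rewrite g1E => /mcoeff_lin_comb_neq0 [j nz].
exact: (degG _ (mem_nth 0 (ltn_ord j)) _ nz).
Qed.

Lemma loop_inv_next delta (G G1 : seq P) Z w d :
  loop_inv delta G Z w d -> LI Z G G1 ->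
  let Z' := [seq x <- Z | x \notin Zsel Z G1] in
  loop_inv delta [seq del_nondiv Z' g | g <- G1] Z' (upd_w w (Zsel Z G1) d) (delta * d + 1).
Proof.
move=> inv LIG Z'; have stepG1 := loop_inv_LI inv LIG; case: inv => [uZ lew led _ _].
have lew' x : x \notin Z' -> (upd_w w (Zsel Z G1) d x <= d)%N.
  by rewrite ffunE mem_filter negb_and negbK; case: ifP => //= _; apply: lew.
split=> [| x /lew' lewx | | g /mapP [g1 g1G1 ->] | g /mapP [g1 g1G1 ->]].
- exact: filter_uniq.
- exact: leq_trans lewx led.
- nia.
- exact/deg_bounded_del_nondiv/(stepG1 _ g1G1).2.
have [[f spf low_f] degg1] := stepG1 _ g1G1; exists f => //.
have -> : f - del_nondiv Z' g1 = (f - g1) + (g1 - del_nondiv Z' g1) by rewrite addrA subrK.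
apply: low_termsD.
  apply: (low_terms_weaken _ _ led low_f); first by move=> x; rewrite mem_filter => /andP[].
  by move=> x xNZ; rewrite ffunE; case: ifP => //; rewrite mem_filter => /andP[_ /(negP xNZ)].
exact: low_terms_del_nondiv.
Qed.


Definition W_lead (W : {ffun 'I_n -> nat}) (f : P) x : Prop :=
  forall m, (f - 'X_x)@_m != 0 -> (wdeg W m < W x)%N.

Lemma W_lead_removed delta (G G1 : seq P) Z w d (W : {ffun 'I_n -> nat}) x :
  loop_inv delta G Z w d -> LI Z G G1 -> x \in Zsel Z G1 ->
  (forall y, y \notin Z -> W y = w y) -> W x = d ->
  exists2 f, in_span gs f & W_lead W f x.
Proof.
move=> inv LIG xZ1 eqW Wx; have XG1 : 'X_x \in G1 by move: xZ1; rewrite mem_filter => /andP[].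
have [[f spf low_f] _] := loop_inv_LI inv LIG XG1; exists f => // m /low_f [mZ lt_wd].
rewrite Wx (@eq_wdeg _ _ w) // => i mi.
by apply: eqW; apply: contra mi => /mZ ->.
Qed.

Lemma check_loop_weight_notin delta (G : seq P) Z w d W :
  check_loop delta G Z w d W -> forall x, x \notin Z -> W x = w x.
Proof.
elim=> {G Z w d W} [G Z w d G1 _ _ _ | G Z w d G1 Wf _ _ _ _ IH] x xNZ.
  by rewrite /upd_w ffunE mem_filter (negbTE xNZ) andbF.
rewrite IH; last by rewrite mem_filter (negbTE xNZ) andbF.
by rewrite /upd_w ffunE mem_filter (negbTE xNZ) andbF.
Qed.

Lemma check_loop_W_lead delta (G : seq P) Z w d W :
  check_loop delta G Z w d W -> loop_inv delta G Z w d ->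
  forall x, x \in Z -> exists2 f, in_span gs f & W_lead W f x.
Proof.
have ZselP (Z1 : seq 'I_n) (G1 : seq P) y : y \notin Z1 -> y \notin Zsel Z1 G1.
  by move=> yN; rewrite mem_filter (negbTE yN) andbF.
elim=> {G Z w d W} [G Z w d G1 LIG _ Z'0 | G Z w d G1 Wf LIG _ _ loopf IH] inv x xZ.
  have xZ1 : x \in Zsel Z G1.
    apply: contraT => xN.
    have : x \in [seq y <- Z | y \notin Zsel Z G1] by rewrite mem_filter xN xZ.
    by rewrite Z'0.
  apply: (W_lead_removed inv LIG xZ1); last by rewrite /upd_w ffunE xZ1.
  by move=> y /(ZselP _ G1) yN; rewrite /upd_w ffunE (negbTE yN).
have [xZ1 | xN] := boolP (x \in Zsel Z G1); last first.
  apply: IH; first exact: (loop_inv_next inv LIG).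
  by rewrite mem_filter xN.
have Wf_upd := check_loop_weight_notin loopf.
have xNZ' : x \notin [seq y <- Z | y \notin Zsel Z G1] by rewrite mem_filter xZ1.
apply: (W_lead_removed inv LIG xZ1); last by rewrite Wf_upd // /upd_w ffunE xZ1.
move=> y yN; have yNZ' : y \notin [seq y <- Z | y \notin Zsel Z G1].
  by rewrite mem_filter (negbTE yN) andbF.
by rewrite Wf_upd // /upd_w ffunE (negbTE (ZselP _ G1 _ yN)).
Qed.

End CheckLoop.

Lemma rref_lead_pivot (K : fieldType) p m (A : 'M[K]_(p, m)) (c : 'rV[K]_p) (k : 'I_m) :
  rref_nz A -> (c *m A) 0 k != 0 -> (forall k' : 'I_m, (k' < k)%N -> (c *m A) 0 k' = 0) ->
  exists i, A i k = 1 /\ forall k' : 'I_m, (k' < k)%N -> A i k' = 0.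
Proof.
(* [k] is the pivot of the first row having a nonzero coefficient in [c]. *)
move=> [piv [piv_mono piv1 piv0 before_piv0]] vk before_k.
have vE k' : (c *m A) 0 k' = \sum_i c 0 i * A i k' by rewrite mxE.
have [i1 ci1] : exists i, c 0 i != 0.
  apply/existsP; apply: contraR vk; rewrite negb_exists vE => /forallP c0.
  by rewrite big1 // => i _; move/negPn/eqP: (c0 i) => ->; rewrite mul0r.
have [i0 ci0 min_i0] := @arg_minnP _ i1 (fun i => c 0 i != 0) (fun i : 'I_p => val i) ci1.
have v_piv : (c *m A) 0 (piv i0) = c 0 i0.
  rewrite vE (bigD1 i0) //= piv1 mulr1 big1 ?addr0 // => i ni.
  by rewrite piv0 ?mulr0.
have before_piv (k' : 'I_m) : (k' < piv i0)%N -> (c *m A) 0 k' = 0.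
  move=> lt_k'; rewrite vE big1 // => i _.
  have [-> | /min_i0 le_i0i] := eqVneq (c 0 i) 0; first by rewrite mul0r.
  rewrite before_piv0 ?mulr0 //; apply: leq_trans lt_k' _.
  case: (ltngtP i0 i) le_i0i => [lt_i0i _ | // | eq_i0i _].
    exact: ltnW (piv_mono _ _ lt_i0i).
  by rewrite (val_inj eq_i0i).
have -> : k = piv i0.
  have [lt_k | lt_piv | /val_inj //] := ltngtP k (piv i0).
    by move: vk; rewrite before_piv ?eqxx.
  by move: ci0; rewrite -v_piv before_k ?eqxx.
by exists i0; split=> // k' /before_piv0.
Qed.

Section TermOrder.
Variables (K : fieldType) (n : nat) (le : rel 'X_{1..n}).
Local Notation P := {mpoly K[n]}.
Local Notation mon := 'X_{1..n}.
Hypothesis le_order : term_ordering le.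

Lemma LT_is_W_lead (W : {ffun 'I_n -> nat}) (f : P) x :
  compatible W le -> W_lead W f x -> LT_is le f (mnm1 x).
Proof.
case: le_order => [[le_refl _ _ _] _] le_W lead.
have fE u : u != mnm1 x -> f@_u = (f - 'X_x)@_u.
  by move=> nu; rewrite mcoeffB mcoeffX eq_sym (negbTE nu) subr0.
split.
  rewrite mcoeff_msupp; apply/negP => /eqP f0.
  have : (f - 'X_x)@_(mnm1 x) != 0 by rewrite mcoeffB mcoeffX eqxx f0 sub0r oppr_eq0 oner_neq0.
  by move/lead; rewrite wdeg_mnm1 ltnn.
move=> u; have [-> // | nu] := eqVneq u (mnm1 x).
rewrite mcoeff_msupp fE // => /lead; rewrite -(wdeg_mnm1 W x).
by case/le_W/andP.
Qed.

Variable ts : seq mon.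
Hypothesis sorted_ts : sorted (fun a b => ltT le b a) ts.

Lemma ltT_nth (k1 k2 : 'I_(size ts)) :
  (k1 < k2)%N -> ltT le (nth mnm0 ts k2) (nth mnm0 ts k1).
Proof.
case: le_order => [[_ le_anti le_trans _] _] lt_k.
have gt_trans : transitive (fun a b => ltT le b a).
  move=> b a c /andP[le_ba ne_ba] /andP[le_cb ne_cb]; apply/andP; split.
    exact: le_trans le_ba.
  apply: contra ne_cb => /eqP eq_ca; move: le_ba; rewrite -eq_ca => le_bc.
  by rewrite (le_anti c b) ?le_cb ?le_bc.
by apply: (sorted_ltn_nth gt_trans mnm0 sorted_ts); rewrite ?inE ?ltn_ord.
Qed.

Lemma LT_is_nthP (g : P) (k : 'I_(size ts)) :
  (forall u, g@_u != 0 -> u \in ts) ->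
  LT_is le g (nth mnm0 ts k) <->
  g@_(nth mnm0 ts k) != 0 /\
  forall k' : 'I_(size ts), (k' < k)%N -> g@_(nth mnm0 ts k') = 0.
Proof.
case: le_order => [[le_refl le_anti _ _] _] supp_g.
split=> [[gk max_k] | [gk before_k]].
  split=> [| k' lt_k']; first by rewrite -mcoeff_msupp.
  apply/eqP; rewrite mcoeff_eq0; apply/negP => /max_k le_k'k.
  have /andP[le_kk' ne_kk'] := ltT_nth lt_k'.
  by move: ne_kk'; rewrite (le_anti _ _ (introT andP (conj le_kk' le_k'k))) eqxx.
split=> [| u]; first by rewrite mcoeff_msupp.
rewrite mcoeff_msupp => gu; have u_ts := supp_g _ gu.
have [k'' uE] : exists k'' : 'I_(size ts), nth mnm0 ts k'' = u.
  have lt_u : (index u ts < size ts)%N by rewrite index_mem.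
  by exists (Ordinal lt_u); rewrite /= nth_index.
rewrite -uE in gu *.
have [lt_k''k | /ltT_nth /andP[] // | /val_inj -> //] := ltngtP k'' k.
by rewrite (before_k _ lt_k''k) eqxx in gu.
Qed.

Lemma rref_row_LT (gs : seq P) r' (N : 'M[K]_(r', size gs)) f t :
  (forall t, t \in ts <-> exists2 g, g \in gs & t \in msupp g) ->
  rref_nz (N *m coefmx gs ts) -> (coefmx gs ts <= N *m coefmx gs ts)%MS ->
  in_span gs f -> LT_is le f t ->
  exists i : 'I_r', LT_is le (\sum_(j < size gs) N i j *: gs`_j) t.
Proof.
move=> tsP rrefA /submxP [D ME] [c fE] LTf.
have supp (d : 'I_(size gs) -> K) u : (\sum_j d j *: gs`_j)@_u != 0 -> u \in ts.
  case/mcoeff_lin_comb_neq0 => j nz; apply/tsP; exists gs`_j; first exact: mem_nth.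
  by rewrite mcoeff_msupp.
have [k tE] : exists k : 'I_(size ts), nth mnm0 ts k = t.
  have t_ts : t \in ts by apply: (supp c); rewrite -fE -mcoeff_msupp; case: LTf.
  have lt_t : (index t ts < size ts)%N by rewrite index_mem.
  by exists (Ordinal lt_t); rewrite /= nth_index.
rewrite -tE in LTf *; rewrite fE in LTf.
have [fk before_k] := (LT_is_nthP k (supp c)).1 LTf.
set v := (\row_j c j *m D) *m (N *m coefmx gs ts).
have fE' (k' : 'I_(size ts)) : (\sum_j c j *: gs`_j)@_(nth mnm0 ts k') = v 0 k'.
  by rewrite mcoeff_lin_comb_coefmx /v -mulmxA -ME.
have vk : v 0 k != 0 by rewrite -fE'.
have before_v (k' : 'I_(size ts)) : (k' < k)%N -> v 0 k' = 0.
  by move=> lt_k'; rewrite -fE' before_k.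
have [i [Aik before_i]] := rref_lead_pivot rrefA vk before_v.
have rowE (k' : 'I_(size ts)) :
    (\sum_j N i j *: gs`_j)@_(nth mnm0 ts k') = (N *m coefmx gs ts) i k'.
  by rewrite mcoeff_lin_comb_coefmx !mxE; apply: eq_bigr => j _; rewrite mxE.
exists i; apply/(LT_is_nthP k (supp _)); split=> [| k' lt_k'].
  by rewrite rowE Aik oner_neq0.
by rewrite rowE before_i.
Qed.

End TermOrder.

Theorem mainTheorem5 (K : fieldType) (n : nat) (gs : seq {mpoly K[n]})
    (s : nat) (z : 'I_s -> 'I_n) (W : {ffun 'I_n -> nat})
    (le : rel 'X_{1..n}) (ts : seq 'X_{1..n})
    (r' : nat) (N : 'M[K]_(r', size gs)) :
  ~ in_ideal gs 1 ->
  injective z ->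
  CHECK_returns gs [seq z i | i <- enum 'I_s] W ->
  term_ordering le ->
  compatible W le ->
  uniq ts ->
  (forall t, t \in ts <-> exists2 g, g \in gs & t \in msupp g) ->
  sorted (fun a b => ltT le b a) ts ->
  rref_nz (N *m coefmx gs ts) ->
  (coefmx gs ts <= N *m coefmx gs ts)%MS ->
  let gs' := [seq \sum_(j < size gs) N i j *: gs`_j | i <- enum 'I_r'] in
  exists f : 'I_s -> {mpoly K[n]},
    (forall i, f i \in gs' /\ LT_is le (f i) (mnm1 (z i))) /\
    Z_separating gs z f.
Proof.
move=> _ z_inj [_ loop] le_order le_W _ tsP sorted_ts rrefA rowspace gs'.
have uniq_Z : uniq [seq z i | i <- enum 'I_s] by rewrite map_inj_uniq ?enum_uniq.
have lead_row i : exists g, g \in gs' /\ LT_is le g (mnm1 (z i)).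
  have [f span_f lead_f] :=
    check_loop_W_lead loop (loop_inv_init gs uniq_Z) (map_f _ (mem_enum _ i)).
  have [i' LT_i'] := rref_row_LT le_order sorted_ts tsP rrefA rowspace span_f
    (LT_is_W_lead le_order le_W lead_f).
  by eexists; split; [apply: map_f; apply: mem_enum | exact: LT_i'].
have [f fP] := fin_all_exists lead_row.
exists f; split=> //; split; last by exists le; split=> // i; case: (fP i).
move=> i; case: (fP i) => /mapP [i' _ ->] _.
by apply: in_ideal_span; exists (N i').
Qed.
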